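(* Let $G$ be a finite, simple, connected $(q+1)$-regular graph with $n$ vertices and $m$ edges, let $a\in[0,1]$ and $b\in\mathbb R$, and set $\eta=(1-q)a+b(q+1)$ and $\sigma=b((1-q)a+bq)$. Then the $(a,b)$-zeta function of $G$ satisfies \begin{align*} \mathbf Z_{a,b}(G,u)^{-1}&=(1-b^2u^2)^{m-n}\det\big((1+\sigma u^2)\mathbf I_n-\eta u\mathbf P(G)\big)\\ &=(1-b^2u^2)^{m-n}\det\Big((1-\eta u+\sigma u^2)\mathbf I_n+\frac{\eta u}{q+1}\Delta\Big), \end{align*} where $\Delta=\mathbf D-\mathbf A(G)$ is the Laplacian of $G$.
   Context: $D(G)$ is the set of $2m$ arcs of $G$ (for each edge $uv$, both $(u,v)$ and $(v,u)$); for $e=(u,v)$, $o(e)=u$, $t(e)=v$, $e^{-1}=(v,u)$, and $d_v=\deg v$. The generalized Grover matrix $\tilde{\mathbf U}=(\tilde U_{ef})_{e,f\in D(G)}$ has $\tilde U_{ef}=(2/d_{t(f)}-1)a+b$ if $t(f)=o(e)$ and $f\ne e^{-1}$; $\tilde U_{ef}=(2/d_{t(f)}-1)a$ if $f=e^{-1}$; $0$ otherwise. The $(a,b)$-zeta function is defined by $\mathbf Z_{a,b}(G,u)^{-1}=\det(\mathbf I_{2m}-u\tilde{\mathbf U})$. $\mathbf P(G)$ has entries $P_{uv}=1/\deg u$ if $u,v$ adjacent and $0$ otherwise; $\mathbf D$ is the diagonal degree matrix and $\mathbf A(G)$ the adjacency matrix. *)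

From HB Require Import structures.
From mathcomp Require Import all_boot all_order all_algebra.
Set Implicit Arguments. Unset Strict Implicit. Unset Printing Implicit Defensive.
Import Order.TTheory GRing.Theory Num.Theory.
Local Open Scope ring_scope.

Definition simple_graph (V : finType) (adj : rel V) : Prop :=
  symmetric adj /\ irreflexive adj.

Definition connected_graph (V : finType) (adj : rel V) : Prop :=
  forall x y : V, connect adj x y.

Definition deg (V : finType) (adj : rel V) (v : V) : nat := #|[set w | adj v w]|.

Definition regular_graph (V : finType) (adj : rel V) (k : nat) : Prop :=
  forall v : V, deg adj v = k.

Definition nedges (V : finType) (adj : rel V) : nat :=
  #|[set e : {set V} | [exists u, exists v, adj u v && (e == [set u; v])]]|.

Definition arc (V : finType) (adj : rel V) := {p : V * V | adj p.1 p.2}.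

(* entry U~_{ef} of the generalized Grover matrix; o(e) = e.1, t(e) = e.2 *)
Definition grover_entry (R : fieldType) (V : finType) (adj : rel V) (a b : R)
  (e f : arc adj) : R :=
  let e' := val e in let f' := val f in
  if f'.2 == e'.1 then
    if f' == (e'.2, e'.1) then (2 / (deg adj f'.2)%:R - 1) * a
    else (2 / (deg adj f'.2)%:R - 1) * a + b
  else 0.

Definition grover_mx (R : fieldType) (V : finType) (adj : rel V) (a b : R)
  : 'M[R]_#|{: arc adj}| :=
  \matrix_(i, j) grover_entry a b (enum_val i) (enum_val j).

Definition zeta_ab_inv (R : fieldType) (V : finType) (adj : rel V) (a b u : R) : R :=
  \det (1%:M - u *: grover_mx adj a b).

Definition Pmx (R : fieldType) (V : finType) (adj : rel V) : 'M[R]_#|V| :=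
  \matrix_(i, j) if adj (enum_val i) (enum_val j)
                 then ((deg adj (enum_val i))%:R)^-1 else 0.

Definition Dmx (R : fieldType) (V : finType) (adj : rel V) : 'M[R]_#|V| :=
  \matrix_(i, j) if i == j then (deg adj (enum_val i))%:R else 0.

Definition Amx (R : fieldType) (V : finType) (adj : rel V) : 'M[R]_#|V| :=
  \matrix_(i, j) if adj (enum_val i) (enum_val j) then 1 else 0.

Definition laplacian (R : fieldType) (V : finType) (adj : rel V) : 'M[R]_#|V| :=
  Dmx R adj - Amx R adj.

From Pilot Require Import Defs.
From HB Require Import structures.
From mathcomp Require Import all_boot all_order all_algebra.
From mathcomp Require Import ring.
Import Order.TTheory GRing.Theory Num.Theory.
Set Implicit Arguments. Unset Strict Implicit. Unset Printing Implicit Defensive.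
Local Open Scope ring_scope.

(* The Grover matrix of a (q+1)-regular graph is U = c S T - b J, where S and T
   are the origin and terminus incidence matrices, J is arc reversal and
   c = (2/(q+1) - 1) a + b.  As J is an involution, 1 + u b J is invertible up to
   the scalar 1 - u^2 b^2, and Sylvester's identity det (1 + X Y) = det (1 + Y X)
   turns the 2m x 2m determinant into an n x n one, where T S = A(G) and
   T J S = (q+1) I.  The remaining factor det (1 + u b J) equals (1 - u^2 b^2)^m
   because J swaps the m pairs of opposite arcs. *)

Lemma det_1DmulmxC (R : comPzRingType) m n (A : 'M[R]_(m, n)) (B : 'M[R]_(n, m)) :
  \det (1%:M + A *m B) = \det (1%:M + B *m A).
Proof.
pose M := block_mx 1%:M A (- B) 1%:M.
have eqBA : block_mx 1%:M 0 B 1%:M *m M = block_mx 1%:M A 0 (1%:M + B *m A).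
  by rewrite mulmx_block !mul1mx !mul0mx !addr0 mulmx1 subrr [_ + 1%:M]addrC.
have eqAB : block_mx 1%:M (- A) 0 1%:M *m M = block_mx (1%:M + A *m B) 0 (- B) 1%:M.
  by rewrite mulmx_block !mul1mx !mul0mx mulNmx mulmxN opprK mulmx1 subrr sub0r add0r.
move: (congr1 determinant eqBA) (congr1 determinant eqAB).
by rewrite !det_mulmx det_lblock !det_ublock det_lblock !det1 !mul1r mulr1 => <- <-.
Qed.

Lemma det_1Dmulmx_nil (R : comPzRingType) m n (A : 'M[R]_(m, n)) (B : 'M[R]_(n, m)) :
  B *m A = 0 -> \det (1%:M + A *m B) = 1.
Proof. by move=> BA0; rewrite det_1DmulmxC BA0 addr0 det1. Qed.

Lemma det_1D_involution (R : comPzRingType) N (J E : 'M[R]_N) (x : R) :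
  J *m J = 1%:M -> E *m E = E -> J *m E = (1%:M - E) *m J ->
  \det (1%:M + x *: J) = \det (E + (1 - x ^+ 2) *: (1%:M - E)).
Proof.
move=> JJ EE JE; set F := 1%:M - E; set k := 1 - x ^+ 2.
have EF : E *m F = 0 by rewrite mulmxBr mulmx1 EE subrr.
have FE : F *m E = 0 by rewrite mulmxBl mul1mx EE subrr.
have FF : F *m F = F by rewrite {1}/F mulmxBl mul1mx EF subr0.
have JF : J *m F = E *m J.
  by rewrite mulmxBr mulmx1 JE mulmxBl mul1mx opprB addrC subrK.
set G := J *m E; set H := J *m F.
have GF : G *m F = 0 by rewrite -mulmxA EF mulmx0.
have FH : F *m H = 0 by rewrite /H JF mulmxA FE mul0mx.
have EH : E *m H = H by rewrite /H JF mulmxA EE.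
have GH : G *m H = F by rewrite /G /H JE JF mulmxA -(mulmxA F) JE mulmxA FF -mulmxA JJ mulmx1.
have GE : G *m E = G by rewrite -mulmxA EE.
have HF : H *m F = H by rewrite -mulmxA FF.
have JGH : J = G + H by rewrite -mulmxDr addrC subrK mulmx1.
(* 1 + xJ = (1 + xG) (E + kF) (1 + xH), and both outer factors are unipotent *)
have factor : (1%:M + x *: G) *m (E + k *: F) *m (1%:M + x *: H) = 1%:M + x *: J.
  rewrite !(mulmxDl, mulmxDr) !mul1mx !mulmx1 -!scalemxAl -!scalemxAr.
  rewrite GE GF EH FH GH !(scaler0, mul0mx, addr0) JGH /F /k !scalerDr.
  apply/matrixP => i j; rewrite !mxE; ring.
have EG : E *m G = 0 by rewrite /G JE mulmxA EF mul0mx.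
have unipG : \det (1%:M + x *: G) = 1.
  by rewrite -GE scalemxAl det_1Dmulmx_nil // -scalemxAr EG scaler0.
have unipH : \det (1%:M + x *: H) = 1.
  by rewrite -HF scalemxAl det_1Dmulmx_nil // -scalemxAr FH scaler0.
by rewrite -factor !det_mulmx unipG unipH mul1r mulr1.
Qed.

Lemma det_1B_mulmx_involution (R : fieldType) N n (S : 'M[R]_(N, n)) (T : 'M[R]_(n, N))
    (J : 'M[R]_N) (al be : R) :
  J *m J = 1%:M -> 1 - be ^+ 2 != 0 ->
  \det (1%:M - (al *: (S *m T) - be *: J)) =
  \det (1%:M + be *: J) *
  \det (1%:M - (al / (1 - be ^+ 2)) *: (T *m S - be *: (T *m J *m S))).
Proof.
move=> JJ k0; set k := 1 - be ^+ 2.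
have inv_1DJ : (1%:M + be *: J) *m (1%:M - be *: J) = k *: 1%:M.
  rewrite mulmxDl mul1mx mulmxBr mulmx1 -scalemxAl -scalemxAr JJ scalerA.
  by apply/matrixP => i j; rewrite !mxE /k; ring.
have -> : 1%:M - (al *: (S *m T) - be *: J) =
    (1%:M + be *: J) *m (1%:M + (- (al / k) *: ((1%:M - be *: J) *m S)) *m T).
  rewrite mulmxDr mulmx1 -scalemxAl -scalemxAr !mulmxA inv_1DJ -!scalemxAl mul1mx.
  rewrite scalerA mulNr divfK //.
  by apply/matrixP => i j; rewrite !mxE; ring.
rewrite det_mulmx det_1DmulmxC -scalemxAr mulmxBl mul1mx mulmxBr -scalemxAl -scalemxAr.
by rewrite mulmxA; congr (_ * \det _); apply/matrixP => i j; rewrite !mxE; ring.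
Qed.

Definition finmx (R : Type) (T1 T2 : finType) (F : T1 -> T2 -> R) : 'M[R]_(#|T1|, #|T2|) :=
  \matrix_(i, j) F (enum_val i) (enum_val j).

Section FinMatrix.
Variables (R : comPzRingType) (T1 T2 : finType).

Lemma eq_finmx (F G : T1 -> T2 -> R) : (forall x y, F x y = G x y) -> finmx F = finmx G.
Proof. by move=> eqFG; apply/matrixP => i j; rewrite !mxE eqFG. Qed.

Lemma finmx_mul (T3 : finType) (F : T1 -> T2 -> R) (G : T2 -> T3 -> R) :
  finmx F *m finmx G = finmx (fun x z => \sum_y F x y * G y z).
Proof.
apply/matrixP => i k; rewrite !mxE.
rewrite (big_enum_val (A := T2) (fun y => F (enum_val i) y * G y (enum_val k))) /=.
by apply: eq_bigr => j _; rewrite !mxE.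
Qed.

Lemma finmxD (F G : T1 -> T2 -> R) : finmx F + finmx G = finmx (fun x y => F x y + G x y).
Proof. by apply/matrixP => i j; rewrite !mxE. Qed.

Lemma finmxN (F : T1 -> T2 -> R) : - finmx F = finmx (fun x y => - F x y).
Proof. by apply/matrixP => i j; rewrite !mxE. Qed.

Lemma finmxZ (c : R) (F : T1 -> T2 -> R) : c *: finmx F = finmx (fun x y => c * F x y).
Proof. by apply/matrixP => i j; rewrite !mxE. Qed.

End FinMatrix.

Lemma finmx1 (R : comPzRingType) (T : finType) :
  finmx (fun x y : T => (x == y)%:R) = 1%:M :> 'M[R]_#|T|.
Proof. by apply/matrixP => i j; rewrite !mxE (inj_eq enum_val_inj). Qed.

Lemma sum_eq_natr_mul (R : comPzRingType) (T : finType) (a : T) (G : T -> R) :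
  \sum_y (a == y)%:R * G y = G a.
Proof.
rewrite (bigD1 a) //= eqxx mul1r big1 ?addr0 // => y /negbTE ya.
by rewrite eq_sym ya mul0r.
Qed.

Lemma sum_natr_card (R : comPzRingType) (T : finType) (P : pred T) :
  \sum_x (P x)%:R = #|[set x | P x]|%:R :> R.
Proof.
rewrite -sum1dep_card natr_sum [RHS]big_mkcond /=.
by apply: eq_bigr => x _; case: (P x).
Qed.

Section Arcs.
Variables (V : finType) (adj : rel V).
Hypotheses (adj_sym : symmetric adj) (adj_irr : irreflexive adj).
Local Notation D := (Defs.arc adj).

Definition origin (e : D) : V := (val e).1.
Definition terminus (e : D) : V := (val e).2.

Lemma adj_rev (e : D) : adj (terminus e) (origin e).
Proof. by rewrite adj_sym; exact: (valP e). Qed.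

Definition arc_rev (e : D) : D := exist _ (terminus e, origin e) (adj_rev e).

Lemma origin_rev (e : D) : origin (arc_rev e) = terminus e. Proof. by []. Qed.
Lemma terminus_rev (e : D) : terminus (arc_rev e) = origin e. Proof. by []. Qed.

Lemma arc_revK : involutive arc_rev.
Proof. by case=> [[x y] xy]; apply: val_inj. Qed.

Lemma eq_arc_rev_sym (e f : D) : (f == arc_rev e) = (e == arc_rev f).
Proof. by apply/eqP/eqP => ->; rewrite arc_revK. Qed.

Lemma origin_neq_terminus (e : D) : origin e != terminus e.
Proof. by apply/eqP => eq_ot; move: (valP e); rewrite /= -/(origin e) eq_ot adj_irr. Qed.

(* Every edge has exactly one ascending arc, so arc reversal swaps the ascending
   and the descending arcs. *)
Definition ascending (e : D) : bool := (enum_rank (origin e) < enum_rank (terminus e))%N.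

Lemma ascending_rev (e : D) : ascending (arc_rev e) = ~~ ascending e.
Proof.
rewrite /ascending origin_rev terminus_rev; case: ltngtP => // /val_inj/enum_rank_inj eq_to.
by move: (origin_neq_terminus e); rewrite eq_to eqxx.
Qed.

Lemma card_arcs_from (v : V) : #|[set e : D | origin e == v]| = deg adj v.
Proof.
rewrite /deg -(card_in_imset (f := terminus) (D := [set e : D | origin e == v])).
  apply: eq_card => w; rewrite [in RHS]inE; apply/imsetP/idP.
    by move=> [e]; rewrite inE => /eqP <- ->; exact: (valP e).
  by move=> vw; exists (exist _ (v, w) vw); rewrite ?inE.
move=> e1 e2; rewrite !inE => /eqP o1 /eqP o2 eq_t; apply: val_inj.
move: o1 o2 eq_t; rewrite /origin /terminus.
by case: (val e1); case: (val e2) => /= ? ? ? ? -> -> ->.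
Qed.

Lemma card_descending_arcs : #|[set e : D | ~~ ascending e]| = nedges adj.
Proof.
rewrite /nedges -(card_in_imset (f := fun e => [set origin e; terminus e])
   (D := [set e : D | ~~ ascending e])).
  apply: eq_card => E; rewrite [in RHS]inE; apply/imsetP/existsP.
    move=> [e _ ->]; exists (origin e); apply/existsP; exists (terminus e).
    by rewrite eqxx andbT; exact: (valP e).
  move=> [u /existsP [v /andP [uv /eqP ->]]].
  pose e : D := exist _ (u, v) uv.
  case asc_e : (ascending e); last by exists e; rewrite ?inE ?asc_e.
  by exists (arc_rev e); rewrite ?inE ?ascending_rev ?asc_e //= setUC.
move=> e1 e2; rewrite !inE /ascending -!leqNgt => le1 le2 eq_ends.
have /set2P o1 : origin e1 \in [set origin e2; terminus e2] by rewrite -eq_ends set21.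
have /set2P t1 : terminus e1 \in [set origin e2; terminus e2] by rewrite -eq_ends set22.
move: (origin_neq_terminus e1) (origin_neq_terminus e2) le1 le2 o1 t1; clear eq_ends.
rewrite /origin /terminus; case: e1 => [[x1 y1] ?]; case: e2 => [[x2 y2] ?] /=.
move=> n1 n2 le1 le2 [] o1 [] t1; subst; rewrite ?eqxx // in n1.
- exact: val_inj.
- have /val_inj/enum_rank_inj eq_xy : enum_rank x2 = enum_rank y2 :> nat.
    by apply/eqP; rewrite eqn_leq le1 le2.
  by rewrite eq_xy eqxx in n2.
Qed.

End Arcs.

Section ArcMatrices.
Variables (R : comPzRingType) (V : finType) (adj : rel V).
Hypotheses (adj_sym : symmetric adj) (adj_irr : irreflexive adj).
Local Notation D := (Defs.arc adj).
Local Notation arc_rev := (arc_rev adj_sym).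

Definition rev_mx : 'M[R]_#|{: D}| := finmx (fun e f : D => (f == arc_rev e)%:R).
Definition ascending_mx : 'M[R]_#|{: D}| := finmx (fun e f : D => ((e == f) && ascending e)%:R).
Definition origin_mx : 'M[R]_(#|{: D}|, #|V|) := finmx (fun (e : D) v => (origin e == v)%:R).
Definition terminus_mx : 'M[R]_(#|V|, #|{: D}|) := finmx (fun v (f : D) => (terminus f == v)%:R).

Lemma rev_mx_invol : rev_mx *m rev_mx = 1%:M.
Proof.
rewrite finmx_mul -finmx1; apply: eq_finmx => e g.
under eq_bigr => f _ do rewrite eq_sym.
by rewrite sum_eq_natr_mul (arc_revK adj_sym) eq_sym.
Qed.

Lemma ascending_mx_idem : ascending_mx *m ascending_mx = ascending_mx.
Proof.
rewrite finmx_mul; apply: eq_finmx => e g.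
under eq_bigr => f _ do rewrite -mulnb natrM -mulrA.
by rewrite sum_eq_natr_mul; case: (ascending e); rewrite ?mul1r ?mul0r ?andbF.
Qed.

Lemma one_sub_ascending_mx :
  1%:M - ascending_mx = finmx (fun e f : D => ((e == f) && ~~ ascending e)%:R).
Proof.
rewrite -finmx1 finmxN finmxD; apply: eq_finmx => e f.
by case: (e == f); case: (ascending e); rewrite /= ?subrr ?subr0.
Qed.

Lemma rev_mx_ascending : rev_mx *m ascending_mx = (1%:M - ascending_mx) *m rev_mx.
Proof.
rewrite one_sub_ascending_mx !finmx_mul; apply: eq_finmx => e g.
under eq_bigr => f _ do rewrite eq_sym.
under [RHS]eq_bigr => f _ do rewrite -mulnb natrM -mulrA.
by rewrite !sum_eq_natr_mul (ascending_rev adj_sym adj_irr) -mulnb natrM mulrC eq_sym.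
Qed.

Lemma det_ascending_mx (k : R) :
  \det (ascending_mx + k *: (1%:M - ascending_mx)) = k ^+ nedges adj.
Proof.
have -> : ascending_mx + k *: (1%:M - ascending_mx) =
    diag_mx (\row_i (if ascending (enum_val i) then 1 else k)).
  rewrite one_sub_ascending_mx /ascending_mx finmxZ finmxD.
  apply/matrixP => i j; rewrite !mxE (inj_eq enum_val_inj).
  by case: (i == j); case: ascending; rewrite /= ?mulr0 ?mulr1 ?addr0 ?add0r.
rewrite det_diag -(card_descending_arcs adj_sym adj_irr) -prodr_const.
under eq_bigr => i _ do rewrite mxE.
rewrite -(big_enum_val (A := {: D}) (fun e => if ascending e then 1 else k)) /=.
rewrite (bigID (@ascending _ adj)) /= big1 ?mul1r => [|e ->] //.
by apply: eq_big => [e|e /negbTE ->]; rewrite ?inE.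
Qed.

Lemma det_1D_rev_mx (x : R) : \det (1%:M + x *: rev_mx) = (1 - x ^+ 2) ^+ nedges adj.
Proof.
rewrite (det_1D_involution _ rev_mx_invol ascending_mx_idem rev_mx_ascending).
exact: det_ascending_mx.
Qed.

Lemma origin_terminus_mx :
  origin_mx *m terminus_mx = finmx (fun e f : D => (terminus f == origin e)%:R).
Proof. by rewrite finmx_mul; apply: eq_finmx => e f; rewrite sum_eq_natr_mul. Qed.

Lemma terminus_rev_origin_mx d : regular_graph adj d ->
  terminus_mx *m rev_mx *m origin_mx = d%:R *: 1%:M.
Proof.
move=> regG.
have -> : terminus_mx *m rev_mx = finmx (fun v (g : D) => (origin g == v)%:R).
  rewrite finmx_mul; apply: eq_finmx => v g.
  under eq_bigr => f _ do rewrite -(eq_arc_rev_sym adj_sym) mulrC eq_sym.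
  by rewrite sum_eq_natr_mul.
rewrite finmx_mul -finmx1 finmxZ; apply: eq_finmx => v w.
have [<-|vw] := eqVneq v w.
  under eq_bigr => g _ do rewrite -natrM mulnb andbb.
  by rewrite sum_natr_card card_arcs_from regG mulr1.
rewrite mulr0 big1 // => g _.
by case: eqP => [->|]; rewrite ?mul0r // (negbTE vw) mulr0.
Qed.

End ArcMatrices.

Lemma terminus_origin_mx (R : fieldType) (V : finType) (adj : rel V) :
  symmetric adj -> terminus_mx R adj *m origin_mx R adj = Amx R adj.
Proof.
move=> adj_sym; rewrite finmx_mul; apply/matrixP => i j; rewrite !mxE.
set v := enum_val i; set w := enum_val j.
under eq_bigr => f _ do rewrite -natrM mulnb andbC /origin /terminus
  (surjective_pairing (val f)) -xpair_eqE -surjective_pairing.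
rewrite adj_sym; case wv : (adj w v).
  pose e : Defs.arc adj := exist _ (w, v) wv.
  have eq_e (f : Defs.arc adj) : (val f == (w, v)) = (f == e) by rewrite -val_eqE.
  under eq_bigr => f _ do rewrite eq_e.
  by rewrite (bigD1 e) //= eqxx big1 ?addr0 // => f /negbTE ->.
rewrite big1 // => f _; case: eqP => // eq_fv.
by move: (valP f); rewrite /= eq_fv wv.
Qed.

Section RegularGraph.
Variables (R : fieldType) (V : finType) (adj : rel V) (d : nat).
Hypothesis regG : regular_graph adj d.

Lemma Pmx_regular : Pmx R adj = d%:R^-1 *: Amx R adj.
Proof. by apply/matrixP => i j; rewrite !mxE regG; case: adj; rewrite ?mulr1 ?mulr0. Qed.

Lemma Dmx_regular : Dmx R adj = d%:R *: 1%:M.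
Proof. by apply/matrixP => i j; rewrite !mxE regG; case: eqP; rewrite ?mulr1 ?mulr0. Qed.

Lemma grover_mx_regular (adj_sym : symmetric adj) (a b : R) :
  grover_mx adj a b = ((2 / d%:R - 1) * a + b) *: (origin_mx R adj *m terminus_mx R adj)
                      - b *: rev_mx R adj_sym.
Proof.
rewrite origin_terminus_mx /rev_mx !finmxZ finmxN finmxD.
apply/matrixP => i j; rewrite !mxE /grover_entry -val_eqE /= regG.
case: (enum_val i) (enum_val j) => [[x y] ?] [[x' y'] ?].
rewrite /origin /terminus /= xpair_eqE.
by do 2 case: eqP => _; rewrite /= ?andbF; ring.
Qed.

End RegularGraph.

Lemma zeta_ab_inv_regular (R : fieldType) (V : finType) (adj : rel V) (q : nat) (a b u : R) :
  symmetric adj -> irreflexive adj -> regular_graph adj q.+1 ->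
  (q.+1%:R : R) != 0 -> 1 - b ^+ 2 * u ^+ 2 != 0 ->
  let eta := (1 - q%:R) * a + b * (q%:R + 1) in
  let sigma := b * ((1 - q%:R) * a + b * q%:R) in
  zeta_ab_inv adj a b u
    = (1 - b ^+ 2 * u ^+ 2) ^ ((nedges adj)%:Z - #|V|%:Z)
      * \det ((1 + sigma * u ^+ 2) *: 1%:M - (eta * u) *: Pmx R adj).
Proof.
move=> adj_sym adj_irr regG dq0 k0 eta sigma; set k := 1 - b ^+ 2 * u ^+ 2.
have ubk : 1 - (u * b) ^+ 2 = k by rewrite exprMn mulrC.
rewrite /zeta_ab_inv (grover_mx_regular regG) scalerBr !scalerA.
rewrite det_1B_mulmx_involution ?rev_mx_invol ?ubk // det_1D_rev_mx // ubk.
rewrite terminus_origin_mx // (terminus_rev_origin_mx _ _ regG) (Pmx_regular _ regG).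
have -> : 1%:M - (u * ((2 / q.+1%:R - 1) * a + b) / k) *:
            (Amx R adj - u * b *: (q.+1%:R *: 1%:M))
          = k^-1 *: ((1 + sigma * u ^+ 2) *: 1%:M - eta * u *: (q.+1%:R^-1 *: Amx R adj)).
  apply/matrixP => i j; rewrite !mxE /sigma /eta /k -natr1.
  by field; rewrite addrC natr1 dq0 exprMn k0.
by rewrite detZ expfzDr // -exprnN exprVn mulrA.
Qed.

Theorem proposition1 (R : realFieldType) (V : finType) (adj : rel V) (q : nat)
  (a b : R) :
  simple_graph adj -> connected_graph adj -> regular_graph adj q.+1 ->
  0 <= a <= 1 ->
  let n := #|V| in
  let m := nedges adj in
  let eta := (1 - q%:R) * a + b * (q%:R + 1) in
  let sigma := b * ((1 - q%:R) * a + b * q%:R) in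
  forall u : R, 1 - b ^+ 2 * u ^+ 2 != 0 ->
    zeta_ab_inv adj a b u
      = (1 - b ^+ 2 * u ^+ 2) ^ (m%:Z - n%:Z)
        * \det ((1 + sigma * u ^+ 2) *: 1%:M - (eta * u) *: Pmx R adj)
    /\
    zeta_ab_inv adj a b u
      = (1 - b ^+ 2 * u ^+ 2) ^ (m%:Z - n%:Z)
        * \det ((1 - eta * u + sigma * u ^+ 2) *: 1%:M
                + (eta * u / (q%:R + 1)) *: laplacian R adj).
Proof.
move=> [adj_sym adj_irr] _ regG _ n m eta sigma u k0.
have dq0 : (q.+1%:R : R) != 0 by rewrite pnatr_eq0.
rewrite (zeta_ab_inv_regular a adj_sym adj_irr regG dq0 k0); split=> //; congr (_ * \det _).
rewrite /laplacian (Dmx_regular _ regG) (Pmx_regular _ regG) -natr1.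
apply/matrixP => i j; rewrite !mxE /eta /sigma.
by field; rewrite natr1.
Qed.
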